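(* Let $G$ be a finite transitive permutation group and let $H,K\le G$ be subgroups such that $H\cup K$ is an intersecting set. Then $HK=\{hk: h\in H, k\in K\}$ is also an intersecting set.
   Context: For a permutation group $G$ on a finite set $V$, a subset $\mathcal{F}\subseteq G$ is intersecting if for all $g,h\in\mathcal{F}$ there is $v\in V$ with $g(v)=h(v)$. *)

From mathcomp Require Import all_boot all_fingroup.
Set Implicit Arguments. Unset Strict Implicit. Unset Printing Implicit Defensive.
Import GroupScope.

Definition intersecting (V : finType) (F : {set {perm V}}) : Prop :=
  forall g h, g \in F -> h \in F -> exists v : V, g v = h v.

From mathcomp Require Import all_boot all_fingroup.
Import GroupScope.

(* If h1^-1 h2 and k1 k2^-1 (elements of H and K) agree at u, translating on
   the left by h1 and on the right by k2 turns them into h2 k2 and h1 k1,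
   which then agree at h1^-1 u. *)

Lemma perm_agree_translate {T : finType} (c a b d : {perm T}) (u : T) :
  a u = b u -> (c * a * d) (c^-1 u) = (c * b * d) (c^-1 u).
Proof. by rewrite !permM permKV => ->. Qed.

Lemma intersecting_mulg {T : finType} (H K : {group {perm T}}) :
  intersecting (H :|: K) -> intersecting (H * K).
Proof.
move=> interHK _ _ /mulsgP[h1 k1 Hh1 Kk1 ->] /mulsgP[h2 k2 Hh2 Kk2 ->].
have h1Vh2_in : h1^-1 * h2 \in H :|: K by rewrite inE groupM ?groupV.
have k1k2V_in : k1 * k2^-1 \in H :|: K by rewrite inE [_ \in K]groupM ?groupV ?orbT.
have [u agree_u] := interHK _ _ k1k2V_in h1Vh2_in.
exists (h1^-1 u).
have := perm_agree_translate h1 _ _ k2 _ agree_u.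
by rewrite !mulgA mulgKV mulgV mul1g.
Qed.

Theorem lemma5p1 (V : finType) (G H K : {group {perm V}}) :
  [transitive G, on [set: V] | 'P] ->
  H \subset G -> K \subset G ->
  intersecting (H :|: K) ->
  intersecting (H * K).
Proof. by move=> _ _ _; exact: intersecting_mulg. Qed.
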